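(* Let $L$ be an interval locale and $A:J\to\mathbf{Mon}(L_{+})$ a small diagram. Then $X=L(\operatorname{Im}(\varinjlim_{j\in J}A(j)))$ (colimit formed in presheaves) is the colimit of $A$ in $\mathbf{Mon}(L_{+})$, and for every $x\in X(i)$, $$\psi_X(x)=\bigvee_{(j,y)}\psi_{A(j)}(y),$$ where the join ranges over all pairs $(j,y)$ with $j\in J$ and $y\in A(j)(s)$ for some $s\in L$ such that $y\mapsto x$ under the composite $A(j)(s)\to\varinjlim_j A(j)(s)\to\operatorname{Im}(\varinjlim_j A(j))(s)\to X(i)$ (and $\psi_{A(j)}(y)$ means $\psi_{A(j)}$ evaluated at the image of $y$ in $A(j)(i)$).
   Context: A locale $L$ is a complete lattice in which finite meets distribute over arbitrary joins, with Grothendieck topology: $\{b_j\le a\}$ covers $a$ iff $\bigvee_j b_j=a$. $L$ is an interval if it is totally ordered and densely ordered. $i$ is the bottom element of $L$; $L_{+}=L\sqcup\{0\}$ with a new bottom $0<i$. $\mathbf{Mon}(L_{+})$ is the category of sheaves $F$ on $L_{+}$ with $F(b)\to F(a)$ injective for all $a\le b$ in $L$; regard $F(c)\subseteq F(i)$ for $c\in L$, and define $\psi_F:F(i)\to L$ by $\psi_F(x)=\sup\{b\in L: x\in F(b)\}$. For a presheaf $E$ on $L_{+}$, $\operatorname{Im}(E)(s)$ is the image of $E(s)\to E(i)$ for $s\in L$, $\operatorname{Im}(E)(0)=\ast$. For a presheaf $F$ on $L_{+}$, $LF(a)=\varprojlim_{0<b<a}F(b)$ for $a\in L$, $a\neq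 i$, $LF(i)=F(i)$, $LF(0)=\ast$. *)

From Stdlib Require Import Classical ClassicalEpsilon Relations.Relation_Operators.

Set Implicit Arguments.
Unset Strict Implicit.

Record IntervalLocale := {
  car :> Type;
  le : car -> car -> Prop;
  le_refl : forall a, le a a;
  le_trans : forall a b c, le a b -> le b c -> le a c;
  le_antisym : forall a b, le a b -> le b a -> a = b;
  sup : (car -> Prop) -> car;
  sup_ub : forall (P : car -> Prop) x, P x -> le x (sup P);
  sup_least : forall (P : car -> Prop) y, (forall x, P x -> le x y) -> le (sup P) y;
  (* frame law: binary meets distribute over arbitrary joins *)
  distr : forall a (P : car -> Prop),
      sup (fun c => le c a /\ le c (sup P)) =
      sup (fun c => exists b, P b /\ c = sup (fun d => le d a /\ le d b));
  le_total : forall a b, le a b \/ le b a;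
  dense : forall a b, le a b -> a <> b ->
      exists c, (le a c /\ a <> c) /\ (le c b /\ c <> b)
}.

Section Basics.
Variable L : IntervalLocale.

Definition lt (a b : L) : Prop := le a b /\ a <> b.

Definition bot : L := sup (fun _ => False).

Lemma leBot (b : L) : le bot b.
Proof. apply sup_least. intros x [] . Qed.

(* L_+ = option L, with None the new bottom 0 *)
Definition leP (a b : option L) : Prop :=
  match a, b with
  | None, _ => True
  | Some _, None => False
  | Some a, Some b => le a b
  end.

Lemma lt_bot (b : L) : b <> bot -> lt bot b.
Proof. intro nb. split; [apply leBot | intro e; apply nb; symmetry; exact e]. Qed.

Lemma lt_le_trans (c a b : L) : lt c a -> le a b -> lt c b.
Proof.
  intros [h1 h2] h. split; [eapply le_trans; eauto|].
  intro e; subst c. apply h2. apply le_antisym; assumption.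
Qed.

Lemma le_bot_contra (a b : L) : le a b -> b = bot -> a <> bot -> False.
Proof.
  intros h eb na. subst b. apply na. apply le_antisym; [exact h | apply leBot].
Qed.

Record RawPsh := {
  sec : option L -> Type;
  res : forall a b, leP a b -> sec b -> sec a
}.
Arguments sec : clear implicits.
Arguments res : clear implicits.

Definition isPresheaf (F : RawPsh) : Prop :=
  (forall a (h : leP a a) (x : sec F a), res F a a h x = x) /\
  (forall a b c (hab : leP a b) (hbc : leP b c) (hac : leP a c) (x : sec F c),
      res F a b hab (res F b c hbc x) = res F a c hac x).

(* sheaf condition for the topology: {b_k <= a} covers a iff \/ b_k = a in L_+ *)
Definition isSheaf (F : RawPsh) : Prop :=
  forall (a : option L) (I : Type) (b : I -> option L) (hb : forall k, leP (b k) a),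
    (forall u, (forall k, leP (b k) u) -> leP a u) ->
    forall s : forall k, sec F (b k),
      (forall k l c (h1 : leP c (b k)) (h2 : leP c (b l)),
          res F c (b k) h1 (s k) = res F c (b l) h2 (s l)) ->
      exists x : sec F a,
        (forall k, res F (b k) a (hb k) x = s k) /\
        (forall x', (forall k, res F (b k) a (hb k) x' = s k) -> x' = x).

Definition isMon (F : RawPsh) : Prop :=
  isPresheaf F /\ isSheaf F /\
  (forall (a b : L) (h : leP (Some a) (Some b)) (x y : sec F (Some b)),
      res F (Some a) (Some b) h x = res F (Some a) (Some b) h y -> x = y).

Record MonSheaf := { raw :> RawPsh; raw_mon : isMon raw }.

Definition isNat (F G : RawPsh) (m : forall a, sec F a -> sec G a) : Prop :=
  forall a b (h : leP a b) (x : sec F b), m a (res F a b h x) = res G a b h (m b x).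

(* psi_F(x) = sup { b in L | x in F(b) }, with F(b) viewed inside F(i) *)
Definition psi (F : RawPsh) (x : sec F (Some bot)) : L :=
  sup (fun b => exists y : sec F (Some b), res F (Some bot) (Some b) (leBot b) y = x).

End Basics.
Arguments sec {L} r _.
Arguments res {L} r a b _ _.
Arguments isNat {L F G} m.
Arguments psi {L F} x.

Arguments bot {L}.

Record Cat := {
  ob : Type;
  hom : ob -> ob -> Type;
  idm : forall j, hom j j;
  cmp : forall j k l, hom k l -> hom j k -> hom j l;
  cmp_idl : forall j k (f : hom j k), cmp (idm k) f = f;
  cmp_idr : forall j k (f : hom j k), cmp f (idm j) = f;
  cmp_assoc : forall j k l m (f : hom j k) (g : hom k l) (h : hom l m),
      cmp h (cmp g f) = cmp (cmp h g) f
}.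
Arguments hom : clear implicits.
Arguments idm : clear implicits.
Arguments cmp {c j k l} _ _.

Record Diagram (L : IntervalLocale) (J : Cat) := {
  Aob : ob J -> MonSheaf L;
  Amap : forall j k, hom J j k -> forall a, sec (Aob j) a -> sec (Aob k) a;
  Amap_nat : forall j k (f : hom J j k), isNat (@Amap j k f);
  Amap_id : forall j a x, @Amap j j (idm J j) a x = x;
  Amap_comp : forall j k l (f : hom J j k) (g : hom J k l) a x,
      @Amap j l (cmp g f) a x = @Amap k l g a (@Amap j k f a x)
}.
Arguments Aob {L J} d j.
Arguments Amap {L J} d {j k} f a _.

Section Colim.
Variables (L : IntervalLocale) (J : Cat) (A : Diagram L J).

(* colimit in presheaves at s in L: classes of (j, y), y in A(j)(s) *)
Definition Elt (s : L) : Type := { j : ob J & sec (Aob A j) (Some s) }.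

Definition cstep (s : L) (z w : Elt s) : Prop :=
  exists f : hom J (projT1 z) (projT1 w),
    projT2 w = Amap A f (Some s) (projT2 z).

Definition crel (s : L) : Elt s -> Elt s -> Prop := clos_refl_sym_trans _ (@cstep s).

(* elements of (colim_j A(j))(s): equivalence classes *)
Definition Eel (s : L) : Type :=
  { P : Elt s -> Prop | exists z, forall w, P w <-> crel z w }.

Definition toI (s : L) (z : Elt s) : Elt bot :=
  existT _ (projT1 z) (res (Aob A (projT1 z)) (Some bot) (Some s) (leBot s) (projT2 z)).

(* Im(E)(s): the image of E(s) -> E(i), a subset of E(i) *)
Definition ImE (s : L) (c : Eel bot) : Prop :=
  exists z : Elt s, forall w, proj1_sig c w <-> crel (toI z) w.

Definition ImSec (s : L) : Type := { c : Eel bot | ImE s c }.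

(* L(Im E)(a) for a <> i: limit over 0 < b < a of Im(E)(b) (restrictions are inclusions) *)
Definition LimSec (a : L) : Type :=
  { f : forall b, lt b a -> ImSec b |
    forall b b' (hb : lt b a) (hb' : lt b' a), le b' b ->
      proj1_sig (f b' hb') = proj1_sig (f b hb) }.

(* X = L(Im(colim A)); X(0) = *, X(i) = Im(E)(i), X(a) = LimSec a otherwise *)
Definition Xsec (o : option L) : Type :=
  match o with
  | None => unit
  | Some a => ({ _ : a = bot & ImSec bot } + { _ : a <> bot & LimSec a })%type
  end.

Definition atBot (b : L) (x : Xsec (Some b)) : ImSec bot :=
  match x with
  | inl (existT _ _ c) => c
  | inr (existT _ nb f) => proj1_sig f bot (lt_bot nb)
  end.

Definition Xval (x : Xsec (Some bot)) : Eel bot := proj1_sig (atBot x).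

Definition mkLim (a : L) (g : forall b, lt b a -> ImSec b)
  (pf : forall b b' (hb : lt b a) (hb' : lt b' a), le b' b ->
      proj1_sig (g b' hb') = proj1_sig (g b hb)) : LimSec a := exist _ g pf.

Definition restrLim (a b : L) (h : le a b) (na : a <> bot) (x : Xsec (Some b)) : LimSec a :=
  match x with
  | inl (existT _ eb _) => False_rect _ (le_bot_contra h eb na)
  | inr (existT _ _ f) =>
      @mkLim a (fun b' (hb' : lt b' a) => proj1_sig f b' (lt_le_trans hb' h))
        (fun b1 b2 (h1 : lt b1 a) (h2 : lt b2 a) hle =>
           proj2_sig f b1 b2 (lt_le_trans h1 h) (lt_le_trans h2 h) hle)
  end.

Definition Xres (a b : option L) : leP a b -> Xsec b -> Xsec a :=
  match a as a0 return leP a0 b -> Xsec b -> Xsec a0 with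
  | None => fun _ _ => tt
  | Some a =>
      match b as b0 return leP (Some a) b0 -> Xsec b0 -> Xsec (Some a) with
      | None => fun h _ => False_rect _ h
      | Some b => fun h x =>
          match excluded_middle_informative (a = bot) with
          | left ea => inl (existT _ ea (atBot x))
          | right na => inr (existT _ na (restrLim h na x))
          end
      end
  end.

Definition Xraw : RawPsh L := {| sec := Xsec; res := Xres |}.

Definition cls (j : ob J) (a : L) (y : sec (Aob A j) (Some a)) : Eel bot :=
  let z := toI (existT _ j y : Elt a) in
  exist _ (crel z) (ex_intro (fun z' => forall w, crel z w <-> crel z' w) z (fun w => iff_refl _)).

Lemma im_cls (j : ob J) (a : L) (y : sec (Aob A j) (Some a)) (b' : L) (h : le b' a) :
  ImE b' (cls y).
Proof.
  exists (existT _ j (res (Aob A j) (Some b') (Some a) h y) : Elt b').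
  intro w. unfold cls, toI; simpl.
  destruct (raw_mon (Aob A j)) as [[_ Hc] _].
  rewrite (Hc (Some bot) (Some b') (Some a) (leBot b') h (leBot a) y).
  tauto.
Qed.

Definition iota (j : ob J) (o : option L) : sec (Aob A j) o -> sec Xraw o :=
  match o as o0 return sec (Aob A j) o0 -> sec Xraw o0 with
  | None => fun _ => tt
  | Some a => fun y =>
      match excluded_middle_informative (a = bot) with
      | left ea => inl (existT _ ea (exist _ (cls y) (im_cls y (leBot a))))
      | right na => inr (existT _ na
          (@mkLim a (fun b' (hb' : lt b' a) => exist _ (cls y) (im_cls y (proj1 hb')))
                   (fun _ _ _ _ _ => eq_refl)))
      end
  end.

End Colim.
Arguments Xraw {L J} A.
Arguments iota {L J} A j o _.
Arguments cls {L J A j a} y.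
Arguments Xval {L J A} x.

(* Write E for the colimit of A in presheaves and X = L(Im E).  By construction a
   section of X over a in L is nothing but one class c in E(i), subject to the
   condition that c lies in Im(E)(b) for every b < a; restriction maps forget
   this condition.  All remaining
   statements are then reduced to facts about classes:
   - X is a presheaf with injective restrictions, and a sheaf because a
     compatible family has one common class, which is admissible below a;
   - the maps iota_j form a cocone since diagram maps preserve classes;
   - a cocone g into G induces u(x) = the unique element of G(a) whose
     restriction to i is g of any representative of the class of x; it exists
     by gluing in G along the cover {b | b < a} of a (density of L);
   - psi_X(x) is the supremum of the b with class(x) in Im(E)(b) (density
     again), and each such b is witnessed by some y in A(j)(b). *)

From Stdlib Require Import Classical ClassicalEpsilon ProofIrrelevance
  FunctionalExtensionality PropExtensionality Relations.Relation_Operators.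
Set Implicit Arguments.
Unset Strict Implicit.

Lemma sig_eq (T : Type) (P : T -> Prop) (a b : {x | P x}) :
  proj1_sig a = proj1_sig b -> a = b.
Proof.
  destruct a as [a pa], b as [b pb]; simpl; intros ->.
  f_equal; apply proof_irrelevance.
Qed.

Section IntervalFacts.
Variable L : IntervalLocale.

(* Density: an element is below u as soon as everything strictly below it is. *)
Lemma le_of_below (a u : L) : (forall d, lt d a -> le d u) -> le a u.
Proof.
  intro below. apply NNPP; intro nle.
  destruct (le_total a u) as [h|h]; [contradiction|].
  assert (neq : u <> a) by (intro e; subst; apply nle, le_refl).
  destruct (dense h neq) as [d [[hud nud] hda]].
  apply nud, le_antisym; [exact hud | exact (below d hda)].
Qed.

Lemma below_covers (a : L) (u : option L) :
  a <> bot -> (forall b, lt b a -> leP (Some b) u) -> leP (Some a) u.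
Proof.
  intros na below. destruct u as [u|].
  - apply le_of_below. intros d hd. exact (below d hd).
  - exact (below bot (lt_bot na)).
Qed.

Lemma leP_bot (o : option L) : o <> None -> leP (Some bot) o.
Proof. destruct o; simpl; intro h; [apply leBot | contradiction h; reflexivity]. Qed.

End IntervalFacts.

Section MonSheafFacts.
Variables (L : IntervalLocale) (G : MonSheaf L).

Lemma mon_res_id a (h : leP a a) (x : sec G a) : res G a a h x = x.
Proof. destruct (raw_mon G) as [[Hid _] _]. apply Hid. Qed.

Lemma mon_res_comp a b c (hab : leP a b) (hbc : leP b c) (hac : leP a c) x :
  res G a b hab (res G b c hbc x) = res G a c hac x.
Proof. destruct (raw_mon G) as [[_ Hcomp] _]. apply Hcomp. Qed.

Lemma mon_res_bot_inj (a : L) (x y : sec G (Some a)) :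
  res G (Some bot) (Some a) (leBot a) x = res G (Some bot) (Some a) (leBot a) y -> x = y.
Proof. destruct (raw_mon G) as [_ [_ Hmono]]. apply Hmono. Qed.

(* G(0) is a singleton: it is the gluing of the empty family covering 0. *)
Lemma mon_zero_singleton : exists x0 : sec G None, forall x : sec G None, x = x0.
Proof.
  destruct (raw_mon G) as [_ [Hsheaf _]].
  destruct (Hsheaf None False (fun k => match k with end) (fun k => match k with end)
     (fun u _ => I) (fun k => match k with end) (fun k => match k with end))
    as [x0 [_ Huniq]].
  exists x0. intro x. apply Huniq. intros [].
Qed.

(* Gluing along the cover {b | b < a}: an element of G(i) that extends to every
   G(b), b < a, extends to G(a). *)
Lemma mon_extend_below (a : L) (t : sec G (Some bot)) :
  a <> bot ->
  (forall b, lt b a -> exists y : sec G (Some b), res G (Some bot) (Some b) (leBot b) y = t) ->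
  exists w : sec G (Some a), res G (Some bot) (Some a) (leBot a) w = t.
Proof.
  intros na ext.
  set (s := fun k : {b | lt b a} =>
    proj1_sig (constructive_indefinite_description _ (ext _ (proj2_sig k)))).
  assert (Hs : forall k, res G (Some bot) (Some (proj1_sig k)) (leBot _) (s k) = t)
    by (intro k; exact (proj2_sig (constructive_indefinite_description _ (ext _ (proj2_sig k))))).
  destruct (raw_mon G) as [_ [Hsheaf _]].
  destruct (Hsheaf (Some a) {b | lt b a} (fun k => Some (proj1_sig k))
                   (fun k => proj1 (proj2_sig k))) with (s := s) as [w [Hw _]].
  - intros u Hu. apply below_covers; [exact na|]. intros b hb. exact (Hu (exist _ b hb)).
  - intros k l [e|] h1 h2.
    + apply mon_res_bot_inj.
      rewrite (mon_res_comp (a := Some bot) (b := Some e) (leBot e) h1 (leBot _)),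
              (mon_res_comp (a := Some bot) (b := Some e) (leBot e) h2 (leBot _)).
      rewrite !Hs. reflexivity.
    + destruct mon_zero_singleton as [x0 H0]. rewrite (H0 (res _ _ _ h1 _)). symmetry. apply H0.
  - exists w. set (k0 := exist (fun b => lt b a) bot (lt_bot na)).
    rewrite <- (Hs k0), <- (Hw k0), mon_res_id. f_equal. apply proof_irrelevance.
Qed.

End MonSheafFacts.

Section Colimit.
Variables (L : IntervalLocale) (J : Cat) (A : Diagram L J).

Lemma crel_sym s (z w : Elt A s) : crel z w -> crel w z.
Proof. apply rst_sym. Qed.

Lemma crel_trans s (z w v : Elt A s) : crel z w -> crel w v -> crel z v.
Proof. apply rst_trans. Qed.

Lemma eel_rep s (c : Eel A s) : exists z, proj1_sig c z.
Proof. destruct c as [P [z0 Hz0]]; simpl. exists z0. apply Hz0, rst_refl. Qed.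

Lemma eel_iff s (c : Eel A s) z : proj1_sig c z -> forall w, proj1_sig c w <-> crel z w.
Proof.
  destruct c as [P [z0 Hz0]]; simpl. intros Hz w. apply Hz0 in Hz. rewrite Hz0.
  split; intro H; [eapply crel_trans; [apply crel_sym|]|eapply crel_trans]; eassumption.
Qed.

Lemma eel_rel s (c : Eel A s) z w : proj1_sig c z -> proj1_sig c w -> crel z w.
Proof. intros Hz Hw. exact (proj1 (eel_iff Hz w) Hw). Qed.

Lemma toI_bot (z : Elt A bot) : toI z = z.
Proof.
  destruct z as [j y]. unfold toI; simpl. f_equal. apply mon_res_id.
Qed.

Lemma toI_res j a b (h : le a b) (y : sec (Aob A j) (Some b)) :
  toI (existT _ j (res (Aob A j) (Some a) (Some b) h y) : Elt A a)
  = toI (existT _ j y : Elt A b).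
Proof. unfold toI; simpl. f_equal. apply mon_res_comp. Qed.

Lemma cls_eq_iff j a (y : sec (Aob A j) (Some a)) (c : Eel A bot) :
  (forall w, proj1_sig c w <-> crel (toI (existT _ j y : Elt A a)) w) -> cls y = c.
Proof.
  intro H. apply sig_eq. simpl. apply functional_extensionality; intro w.
  apply propositional_extensionality. symmetry. apply H.
Qed.

Lemma cls_of (c : Eel A bot) (z : Elt A bot) : proj1_sig c z -> c = cls (projT2 z).
Proof.
  intro Hz. symmetry. apply cls_eq_iff. destruct z as [j y]. rewrite toI_bot.
  apply eel_iff, Hz.
Qed.

Lemma cls_res j a b (h : le a b) (y : sec (Aob A j) (Some b)) :
  cls (res (Aob A j) (Some a) (Some b) h y) = cls y.
Proof. apply cls_eq_iff. intro w. simpl. rewrite toI_res. tauto. Qed.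

Lemma ImE_bot (c : Eel A bot) : ImE bot c.
Proof.
  destruct (eel_rep c) as [z Hz]. exists z. rewrite toI_bot. apply eel_iff, Hz.
Qed.

Lemma ImE_down b b' (c : Eel A bot) : le b' b -> ImE b c -> ImE b' c.
Proof.
  intros h [[j y] Hz].
  exists (existT _ j (res (Aob A j) (Some b') (Some b) h y) : Elt A b').
  rewrite toI_res. exact Hz.
Qed.

Definition classAt (b : L) (x : Xsec A (Some b)) : Eel A bot := proj1_sig (atBot x).

Lemma Xsec_ext b (x y : Xsec A (Some b)) : classAt x = classAt y -> x = y.
Proof.
  destruct x as [[e1 c1]|[n1 f1]], y as [[e2 c2]|[n2 f2]]; unfold classAt; simpl; intro H;
    try contradiction.
  - assert (e1 = e2) by apply proof_irrelevance. subst e2.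
    do 2 f_equal. apply sig_eq, H.
  - assert (n1 = n2) by apply proof_irrelevance. subst n2. do 2 f_equal.
    apply sig_eq. apply functional_extensionality_dep; intro b'.
    apply functional_extensionality_dep; intro hb. apply sig_eq.
    rewrite <- (proj2_sig f1 b' bot hb (lt_bot n1) (leBot b')),
            <- (proj2_sig f2 b' bot hb (lt_bot n1) (leBot b')).
    exact H.
Qed.

Lemma classAt_Xres a b (h : leP (Some a) (Some b)) (x : Xsec A (Some b)) :
  classAt (Xres (A := A) h x) = classAt x.
Proof.
  unfold Xres. destruct (excluded_middle_informative (a = bot)) as [ea|na]; [reflexivity|].
  unfold classAt; simpl. destruct x as [[eb c]|[nb f]].
  - exfalso. exact (le_bot_contra h eb na).
  - simpl. do 2 f_equal. apply proof_irrelevance.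
Qed.

Lemma classAt_iota j a (y : sec (Aob A j) (Some a)) : classAt (iota A j (Some a) y) = cls y.
Proof. unfold iota. destruct (excluded_middle_informative (a = bot)); reflexivity. Qed.

Lemma ImE_classAt e (x : Xsec A (Some e)) b : lt b e -> ImE b (classAt x).
Proof.
  intro hb. destruct x as [[ee c]|[ne f]].
  - subst e. destruct hb as [h1 h2]. contradiction h2. apply le_antisym; [exact h1 | apply leBot].
  - unfold classAt; simpl. rewrite (proj2_sig f b bot hb (lt_bot ne) (leBot b)).
    exact (proj2_sig (proj1_sig f b hb)).
Qed.

Lemma Xsec_exists a (c : Eel A bot) :
  (a <> bot -> forall b, lt b a -> ImE b c) -> exists x : Xsec A (Some a), classAt x = c.
Proof.
  intro adm. destruct (excluded_middle_informative (a = bot)) as [ea|na].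
  - exists (inl (existT _ ea (exist _ c (ImE_bot c)))). reflexivity.
  - exists (inr (existT _ na (mkLim (g := fun b hb => exist _ c (adm na b hb))
                                    (fun _ _ _ _ _ => eq_refl)))).
    reflexivity.
Qed.

Definition classOpt (o : option L) : Xsec A o -> option (Eel A bot) :=
  match o as o0 return Xsec A o0 -> option (Eel A bot) with
  | None => fun _ => None
  | Some a => fun x => Some (classAt x)
  end.

Lemma Xsec_ext_opt o (x y : Xsec A o) : classOpt x = classOpt y -> x = y.
Proof.
  destruct o as [a|]; simpl.
  - intro H; injection H; apply Xsec_ext.
  - intros _; destruct x, y; reflexivity.
Qed.

Lemma classOpt_Xres o1 o2 (h : leP o1 o2) (x : Xsec A o2) :
  o1 <> None -> classOpt (Xres (A := A) h x) = classOpt x.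
Proof.
  destruct o1 as [a|]; [|intro n; contradiction n; reflexivity].
  destruct o2 as [b|]; [|destruct h]. intros _. simpl. f_equal. apply classAt_Xres.
Qed.

Lemma classOpt_some o (x : Xsec A o) : o <> None -> exists c, classOpt x = Some c.
Proof. destruct o; simpl; intro h; [eexists; reflexivity | contradiction h; reflexivity]. Qed.

(* Functoriality of X reduces to that of classes. *)
Lemma X_presheaf : isPresheaf (Xraw A).
Proof.
  split.
  - intros [a|] h x; cbn [res Xraw sec] in *; [apply Xsec_ext, classAt_Xres | destruct x; reflexivity].
  - intros [a|] [b|] [c|] hab hbc hac x; cbn [res Xraw sec] in *; try contradiction; try reflexivity.
    apply Xsec_ext. rewrite !classAt_Xres. reflexivity.
Qed.

(* Restrictions of X are injective since they preserve classes. *)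
Lemma X_mono (a b : L) (h : leP (Some a) (Some b)) (x y : sec (Xraw A) (Some b)) :
  res (Xraw A) (Some a) (Some b) h x = res (Xraw A) (Some a) (Some b) h y -> x = y.
Proof.
  cbn [res Xraw sec]. intro H. apply Xsec_ext.
  rewrite <- (classAt_Xres h x), <- (classAt_Xres h y), H. reflexivity.
Qed.

Lemma cover_nonzero (K : Type) (b : K -> option L) (a : L) :
  (forall u, (forall k, leP (b k) u) -> leP (Some a) u) -> exists k, b k <> None.
Proof.
  intro cov. apply NNPP; intro none. apply (cov None). intro k.
  destruct (b k) as [e|] eqn:E; [|exact I].
  contradiction none. exists k. rewrite E. discriminate.
Qed.

Lemma cover_escapes (K : Type) (b : K -> option L) (a b' : L) :
  (forall u, (forall k, leP (b k) u) -> leP (Some a) u) -> lt b' a ->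
  exists k, ~ leP (b k) (Some b').
Proof.
  intros cov [h1 h2]. apply NNPP; intro none. apply h2, le_antisym; [exact h1|].
  apply (cov (Some b')). intro k. apply NNPP; intro; apply none; exists k; assumption.
Qed.

Lemma ImE_classOpt o (x : Xsec A o) b' c :
  ~ leP o (Some b') -> classOpt x = Some c -> ImE b' c.
Proof.
  destruct o as [e|]; simpl; intros hn H; [|contradiction hn; exact I].
  injection H as <-. apply ImE_classAt.
  destruct (le_total e b') as [h|h]; [contradiction|].
  split; [exact h|]. intro E; subst; apply hn, le_refl.
Qed.

Lemma Xres_of_class o a (h : leP o (Some a)) (x : Xsec A (Some a)) (y : Xsec A o) :
  (o <> None -> classOpt y = Some (classAt x)) -> Xres (A := A) h x = y.
Proof.
  intro H. apply Xsec_ext_opt. destruct o as [e|]; [|reflexivity].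
  rewrite classOpt_Xres by discriminate. symmetry. apply H; discriminate.
Qed.

(* The sheaf condition over 0 holds trivially: X(0) is a point. *)
Lemma X_sheaf_zero (K : Type) (b : K -> option L) (hb : forall k, leP (b k) None)
  (s : forall k, sec (Xraw A) (b k)) :
  exists x : sec (Xraw A) None,
    (forall k, res (Xraw A) (b k) None (hb k) x = s k) /\
    (forall x', (forall k, res (Xraw A) (b k) None (hb k) x' = s k) -> x' = x).
Proof.
  exists tt. split.
  - intro k. generalize (hb k) (s k). destruct (b k); intros h sk; [destruct h | destruct sk; reflexivity].
  - intros [] _. reflexivity.
Qed.

(* Gluing over a in L: a compatible family has a common admissible class. *)
Lemma X_sheaf : isSheaf (Xraw A).
Proof.
  intros [a|] K b hb cov s compat; [|apply X_sheaf_zero].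
  destruct (cover_nonzero cov) as [k0 Hk0].
  destruct (classOpt_some (s k0) Hk0) as [c Hc].
  (* compatibility forces all nonzero members of the family to carry the class c *)
  assert (same : forall k, b k <> None -> classOpt (s k) = Some c).
  { intros k hk. rewrite <- Hc.
    rewrite <- (classOpt_Xres (leP_bot hk) (s k)), <- (classOpt_Xres (leP_bot Hk0) (s k0))
      by discriminate.
    f_equal. exact (compat k k0 (Some bot) (leP_bot hk) (leP_bot Hk0)). }
  assert (adm : a <> bot -> forall b', lt b' a -> ImE b' c).
  { intros _ b' hb'. destruct (cover_escapes cov hb') as [k hk].
    apply (ImE_classOpt (x := s k) hk), same.
    intro E. rewrite E in hk. exact (hk I). }
  destruct (Xsec_exists adm) as [x Hx].
  exists x. split.
  - intro k. apply Xres_of_class. intro hk. rewrite Hx. apply same, hk.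
  - intros x' Hx'. apply Xsec_ext. rewrite Hx.
    specialize (Hx' k0). cbn [res Xraw sec] in Hx'. apply (f_equal (@classOpt (b k0))) in Hx'.
    rewrite classOpt_Xres, Hc in Hx' by exact Hk0. injection Hx'; auto.
Qed.

Lemma X_mon : isMon (Xraw A).
Proof. split; [exact X_presheaf | split; [exact X_sheaf | exact X_mono]]. Qed.

(* Each iota_j is natural because cls is invariant under restriction. *)
Lemma iota_nat j : isNat (iota A j).
Proof.
  intros [a|] [b|] h y; try destruct h; try reflexivity.
  apply Xsec_ext. cbn [res Xraw sec]. rewrite classAt_Xres, !classAt_iota. apply cls_res.
Qed.

(* Diagram maps preserve classes: y and its image are related by one step. *)
Lemma cls_Amap j k (f : hom J j k) a (y : sec (Aob A j) (Some a)) :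
  cls (Amap A f (Some a) y) = cls y.
Proof.
  apply cls_eq_iff. intro w. simpl.
  assert (step : crel (toI (existT _ j y : Elt A a))
                      (toI (existT _ k (Amap A f (Some a) y) : Elt A a))).
  { apply rst_step. exists f. simpl. symmetry. apply (Amap_nat f (a := Some bot) (b := Some a) (leBot a)). }
  split; intro H; [eapply crel_trans; [apply crel_sym, step | exact H]|].
  eapply crel_trans; [exact step | exact H].
Qed.

Lemma iota_cocone j k (f : hom J j k) a (y : sec (Aob A j) a) :
  iota A k a (Amap A f a y) = iota A j a y.
Proof.
  destruct a as [a|]; [|reflexivity].
  apply Xsec_ext. rewrite !classAt_iota. apply cls_Amap.
Qed.

Section Universal.
Variables (G : MonSheaf L) (g : forall j a, sec (Aob A j) a -> sec G a).
Arguments g : clear implicits.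
Hypothesis g_nat : forall j, isNat (g j).
Hypothesis g_cocone :
  forall j k (f : hom J j k) a (y : sec (Aob A j) a), g k a (Amap A f a y) = g j a y.

Lemma g_crel s (z w : Elt A s) :
  crel z w -> g (projT1 z) (Some s) (projT2 z) = g (projT1 w) (Some s) (projT2 w).
Proof.
  induction 1 as [z w [f Hf] | z | z w _ IH | z w v _ IH1 _ IH2].
  - rewrite Hf. symmetry. apply g_cocone.
  - reflexivity.
  - symmetry; exact IH.
  - rewrite IH1; exact IH2.
Qed.

Definition induced (o : option L) : Xsec A o -> sec G o -> Prop :=
  match o as o0 return Xsec A o0 -> sec G o0 -> Prop with
  | None => fun _ _ => True
  | Some a => fun x w => forall z : Elt A bot, proj1_sig (classAt x) z ->
      res G (Some bot) (Some a) (leBot a) w = g (projT1 z) (Some bot) (projT2 z)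
  end.

(* Induced values are unique, since restriction to i is injective in G. *)
Lemma induced_unique o (x : Xsec A o) (w1 w2 : sec G o) :
  induced x w1 -> induced x w2 -> w1 = w2.
Proof.
  destruct o as [a|]; simpl; intros H1 H2.
  - destruct (eel_rep (classAt x)) as [z Hz].
    apply mon_res_bot_inj. rewrite (H1 z Hz), (H2 z Hz). reflexivity.
  - destruct (mon_zero_singleton G) as [x0 H0]. rewrite (H0 w1). symmetry. apply H0.
Qed.

(* Existence: for a <> i the value is glued along the cover {b | b < a}, using
   that the class of x has representatives at every level b < a. *)
Lemma induced_exists o (x : Xsec A o) : exists w, induced x w.
Proof.
  destruct o as [a|]; [simpl | destruct (mon_zero_singleton G) as [w _]; exists w; exact I].
  destruct (eel_rep (classAt x)) as [z0 Hz0].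
  set (t := g (projT1 z0) (Some bot) (projT2 z0)).
  assert (Ht : forall z, proj1_sig (classAt x) z -> g (projT1 z) (Some bot) (projT2 z) = t)
    by (intros z Hz; apply g_crel, (eel_rel Hz Hz0)).
  assert (Hw : exists w : sec G (Some a), res G (Some bot) (Some a) (leBot a) w = t).
  { destruct (excluded_middle_informative (a = bot)) as [ea|na].
    - subst a. exists t. apply mon_res_id.
    - apply mon_extend_below; [exact na|]. intros b hb.
      destruct (ImE_classAt x hb) as [z Hz].
      exists (g (projT1 z) (Some b) (projT2 z)).
      rewrite <- g_nat. apply (Ht (toI z)), (proj2 (Hz _)), rst_refl. }
  destruct Hw as [w Hw]. exists w. intros z Hz. rewrite Hw. symmetry. apply Ht, Hz.
Qed.

(* Choosing the induced value at each section yields the unique factorisation. *)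
Lemma X_universal :
  exists u : forall a, sec (Xraw A) a -> sec G a,
    isNat u /\
    (forall j a (y : sec (Aob A j) a), u a (iota A j a y) = g j a y) /\
    (forall u' : forall a, sec (Xraw A) a -> sec G a,
        isNat u' ->
        (forall j a (y : sec (Aob A j) a), u' a (iota A j a y) = g j a y) ->
        forall a x, u' a x = u a x).
Proof.
  set (u := fun a (x : Xsec A a) =>
              proj1_sig (constructive_indefinite_description _ (induced_exists x))).
  assert (Hu : forall a x, induced x (u a x))
    by (intros a x; exact (proj2_sig (constructive_indefinite_description _ (induced_exists x)))).
  exists u. split; [|split].
  - intros [a|] [b|] h x; try destruct h;
      try exact (induced_unique (o := None) (x := tt) I I).
    apply (induced_unique (x := Xres h x)); [apply Hu|]. intros z Hz.
    rewrite (mon_res_comp (a := Some bot) (b := Some a) (leBot a) h (leBot b)).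
    apply (Hu (Some b) x z). rewrite <- (classAt_Xres h x). exact Hz.
  - intros j [a|] y; [|exact (induced_unique (o := None) (x := tt) I I)].
    apply (induced_unique (Hu _ _)). intros z Hz.
    change (proj1_sig (classAt (iota A j (Some a) y)) z) in Hz. rewrite classAt_iota in Hz.
    rewrite <- (@g_nat j (Some bot) (Some a) (leBot a)).
    exact (g_crel (z := toI (existT _ j y : Elt A a)) Hz).
  - intros u' u'_nat u'_iota [a|] x; [|exact (induced_unique (o := None) (x := tt) I I)].
    apply (induced_unique (x := x)); [|apply Hu]. intros z Hz.
    rewrite <- (u'_nat (Some bot) (Some a) (leBot a)), <- (u'_iota (projT1 z) (Some bot)).
    f_equal. apply Xsec_ext. cbn [res Xraw sec]. rewrite classAt_Xres, classAt_iota. apply cls_of, Hz.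
Qed.

End Universal.

Lemma psi_X_sup_Im (x : sec (Xraw A) (Some bot)) : psi x = sup (fun b => ImE b (Xval x)).
Proof.
  unfold psi. apply le_antisym; apply sup_least.
  - intros b [y Hy]. apply le_of_below. intros d hd. apply sup_ub.
    change (ImE d (classAt x)). rewrite <- Hy. cbn [res Xraw sec]. rewrite classAt_Xres.
    apply ImE_classAt, hd.
  - intros t Ht. apply sup_ub.
    destruct (Xsec_exists (a := t) (c := Xval x) (fun _ b' hb => ImE_down (proj1 hb) Ht))
      as [y Hy].
    exists y. apply Xsec_ext. cbn [res Xraw sec]. rewrite classAt_Xres. exact Hy.
Qed.

(* A class c lies in Im(E)(b) exactly when it is cls y for some y in A(j)(b), and
   then b <= psi_{A(j)}(y); hence the two suprema agree. *)
Lemma sup_Im_eq_sup_psi (c : Eel A bot) :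
  sup (fun b => ImE b c) =
  sup (fun v => exists (j : ob J) (s : L) (y : sec (Aob A j) (Some s)),
         cls y = c /\ v = psi (res (Aob A j) (Some bot) (Some s) (leBot s) y)).
Proof.
  apply le_antisym; apply sup_least.
  - intros t [[j y] Hz].
    apply le_trans with (psi (res (Aob A j) (Some bot) (Some t) (leBot t) y)).
    + apply sup_ub. exists y. reflexivity.
    + apply sup_ub. exists j, t, y. split; [apply cls_eq_iff, Hz | reflexivity].
  - intros v [j [s [y [Hcy ->]]]]. apply sup_least. intros b [y' Hy']. apply sup_ub.
    exists (existT _ j y' : Elt A b). intro w. rewrite <- Hcy. simpl.
    unfold toI; simpl. rewrite Hy'. tauto.
Qed.

End Colimit.

Theorem lemma28 (L : IntervalLocale) (J : Cat) (A : Diagram L J) :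
  (* X = L(Im(colim A)) lies in Mon(L_+) *)
  isMon (Xraw A) /\
  (* the maps iota_j form a cocone *)
  (forall j, isNat (iota A j)) /\
  (forall j k (f : hom J j k) a (y : sec (Aob A j) a),
      iota A k a (Amap A f a y) = iota A j a y) /\
  (* universal property of the colimit in Mon(L_+) *)
  (forall (G : MonSheaf L) (g : forall j a, sec (Aob A j) a -> sec G a),
      (forall j, isNat (g j)) ->
      (forall j k (f : hom J j k) a (y : sec (Aob A j) a), g k a (Amap A f a y) = g j a y) ->
      exists u : forall a, sec (Xraw A) a -> sec G a,
        isNat u /\
        (forall j a (y : sec (Aob A j) a), u a (iota A j a y) = g j a y) /\
        (forall u' : forall a, sec (Xraw A) a -> sec G a,
            isNat u' ->
            (forall j a (y : sec (Aob A j) a), u' a (iota A j a y) = g j a y) ->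
            forall a x, u' a x = u a x)) /\
  (* formula for psi_X *)
  (forall x : sec (Xraw A) (Some bot),
      psi x =
      sup (fun v => exists (j : ob J) (s : L) (y : sec (Aob A j) (Some s)),
             cls y = Xval x /\
             v = psi (res (Aob A j) (Some bot) (Some s) (leBot s) y))).
Proof.
  split; [apply X_mon|].
  split; [apply iota_nat|].
  split; [intros; apply iota_cocone|].
  split; [intros G g g_nat g_cocone; exact (X_universal g_nat g_cocone)|].
  intro x. rewrite psi_X_sup_Im. apply sup_Im_eq_sup_psi.
Qed.
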